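(* Let $\rho<r<1$. If $\mathcal{D},\mathcal{D}'\in\mathcal{M}$ and $\lambda,\lambda'>0$ satisfy $\mathcal{R}_r\mathcal{D}=\lambda\mathcal{D}$ and $\mathcal{R}_r\mathcal{D}'=\lambda'\mathcal{D}'$, then $\lambda=\lambda'$.
   Context: Let $q_0=(\tfrac12,\tfrac{\sqrt3}{2})$, $q_1=(0,0)$, $q_2=(1,0)$, $\rho=\frac{\sqrt5-1}{2}$, $F_0(x)=\rho^2(x-q_0)+q_0$, $F_1(x)=\rho(x-q_1)+q_1$, $F_2(x)=\rho(x-q_2)+q_2$. For a finite word $w$ over $\{0,1,2\}$, $|w|$ is its length and $F_w=F_{w_1}\circ\cdots\circ F_{w_{|w|}}$. $W_1$ is a set of words of the form $w_1\cdots w_n0$ ($n\ge0$, $w_i\in\{1,2\}$) containing exactly one word for each distinct map $F_w$ of this form. $V_0=\{q_0,q_1,q_2\}$, $V_1=\bigcup_{w\in W_1}F_wV_0$, $\bar V_1$ its closure. $\mathcal{M}$ is the set of forms $\mathcal{D}(f,g)=\frac12\sum_{i,j}a_{ij}(f(q_i)-f(q_j))(g(q_i)-g(q_j))$ on functions on $V_0$ with $(a_{ij})$ symmetric, $a_{ii}=0$, $a_{ij}\ge0$ and irreducible. $\Psi_r\mathcal{D}(f,g)=\sum_{w\in W_1}r^{-|w|+1}\mathcal{D}(f\circ F_w,g\circ F_w)$ on $\mathrm{Dom}(\Psi_r\mathcal{D})=\{f:V_1\to\mathbb{R}:\Psi_r\mathcal{D}(f,f)<\infty\}$, and for $\rho<r<1$,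 $\mathcal{R}_r\mathcal{D}(u)=\inf\{\Psi_r\mathcal{D}(f):f\in\mathrm{Dom}(\Psi_r\mathcal{D}),f|_{V_0}=u\}$ for $u:V_0\to\mathbb{R}$. *)

From HB Require Import structures.
From mathcomp Require Import all_boot all_order all_algebra.
From mathcomp Require Import all_classical all_reals all_analysis.
Import numFieldNormedType.Exports.

Import Order.TTheory GRing.Theory Num.Theory.
Local Open Scope classical_set_scope.
Local Open Scope ring_scope.

Section Defs.
Variable R : realType.

Local Notation point := (R * R)%type.

Definition rho : R := (Num.sqrt 5 - 1) / 2.

Definition q (i : 'I_3) : point :=
  match val i with
  | 0%N => (1/2, Num.sqrt 3 / 2)
  | 1%N => (0, 0)
  | _ => (1, 0)
  end.

Definition ratio (i : 'I_3) : R := if val i == 0%N then rho ^+ 2 else rho.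

Definition F (i : 'I_3) (x : point) : point :=
  (ratio i * (x.1 - (q i).1) + (q i).1, ratio i * (x.2 - (q i).2) + (q i).2).

Definition Fw (w : seq 'I_3) : point -> point :=
  foldr (fun i g => F i \o g) id w.

Definition good_word (w : seq 'I_3) : Prop :=
  exists s : seq 'I_3, all (fun i => i != ord0) s /\ w = rcons s ord0.

Definition W1_spec (W1 : set (seq 'I_3)) : Prop :=
  [/\ (forall w, W1 w -> good_word w),
      (forall w, good_word w -> exists2 w', W1 w' & Fw w' = Fw w) &
      (forall w w', W1 w -> W1 w' -> Fw w = Fw w' -> w = w')].

Definition V1 (W1 : set (seq 'I_3)) : set point :=
  [set x | exists w, W1 w /\ exists i : 'I_3, x = Fw w (q i)].

Definition Dform (a : 'M[R]_3) (f g : 'I_3 -> R) : R :=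
  2^-1 * \sum_(i < 3) \sum_(j < 3) a i j * (f i - f j) * (g i - g j).

Definition inM (a : 'M[R]_3) : Prop :=
  [/\ (forall i j, a i j = a j i),
      (forall i, a i i = 0),
      (forall i j, 0 <= a i j) &
      (forall S : {set 'I_3}, S != finset.set0 -> S != [set: 'I_3]%SET ->
         exists i j, [/\ i \in S, j \notin S & 0 < a i j])].

Definition Psi (W1 : set (seq 'I_3)) (r : R) (a : 'M[R]_3) (f : point -> R)
  : \bar R :=
  (\esum_(w in W1)
     ((r ^- (size w).-1) * Dform a (fun i => f (Fw w (q i)))
                                   (fun i => f (Fw w (q i))))%:E)%E.

(* f|_{V_0} = u : the values of f on V_1 tend to u(q_i) at q_i (within V_1);
   this is f(q_i) = u_i when q_i is in V_1 *)
Definition boundary (W1 : set (seq 'I_3)) (f : point -> R) (u : 'I_3 -> R)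
  : Prop :=
  forall i : 'I_3, f @ within (V1 W1) (nbhs (q i)) --> u i.

Definition RR (W1 : set (seq 'I_3)) (r : R) (a : 'M[R]_3) (u : 'I_3 -> R)
  : \bar R :=
  ereal_inf [set Psi W1 r a f | f in
              [set f : point -> R | (Psi W1 r a f < +oo)%E /\ boundary W1 f u]].

End Defs.

From HB Require Import structures.
From mathcomp Require Import all_boot all_order all_algebra.
From mathcomp Require Import all_classical all_reals all_analysis.
From mathcomp Require Import ring lra.
Import numFieldNormedType.Exports.
Import Order.TTheory GRing.Theory Num.Theory.
Local Open Scope classical_set_scope.
Local Open Scope ring_scope.

(* The proof uses only two properties of the renormalization map R_r:
   it is positively homogeneous and monotone in the form, in the sense that
   c D' <= D pointwise implies c R_r D' <= R_r D (this holds for every set of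
   words W1 as soon as r > 0, since the weights r^{-|w|+1} are positive).

   Next, any two irreducible forms on V_0 are comparable: both are squeezed
   between positive multiples of the complete-graph form
   sqdiff u = (u_0 - u_1)^2 + (u_0 - u_2)^2 + (u_1 - u_2)^2.

   Now if R_r D = lam D and R_r D' = lam' D', then c D' <= D implies
   (c lam'/lam) D' <= D.  Iterating from one comparison constant gives
   c (lam'/lam)^n D' <= D for all n; evaluating at a u with D'(u) > 0 bounds
   the geometric sequence (lam'/lam)^n, hence lam' <= lam.  By symmetry
   lam = lam'. *)

Section QuadraticForms.
Context {R : realType}.

Definition i1 : 'I_3 := Ordinal (isT : (1 < 3)%N).
Definition i2 : 'I_3 := Ordinal (isT : (2 < 3)%N).

Lemma sum_ord3 (F : 'I_3 -> R) : \sum_(i < 3) F i = F ord0 + F i1 + F i2.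
Proof.
rewrite !big_ord_recr big_ord0 /= add0r.
by congr (F _ + F _ + F _); apply/val_inj.
Qed.

Lemma Dform_ge0 (a : 'M[R]_3) (u : 'I_3 -> R) :
  (forall i j, 0 <= a i j) -> 0 <= Dform R a u u.
Proof.
move=> a_ge0; rewrite /Dform mulr_ge0 ?invr_ge0 ?ler0n //.
apply: sumr_ge0 => i _; apply: sumr_ge0 => j _.
by rewrite -mulrA mulr_ge0 // -expr2 sqr_ge0.
Qed.

Definition sqdiff (u : 'I_3 -> R) : R :=
  (u ord0 - u i1) ^+ 2 + (u ord0 - u i2) ^+ 2 + (u i1 - u i2) ^+ 2.

Lemma sqdiff_ge0 (u : 'I_3 -> R) : 0 <= sqdiff u.
Proof. by rewrite !addr_ge0 ?sqr_ge0. Qed.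

Lemma Dform_edges (a : 'M[R]_3) (u : 'I_3 -> R) :
  (forall i j, a i j = a j i) -> (forall i, a i i = 0) ->
  Dform R a u u = a ord0 i1 * (u ord0 - u i1) ^+ 2
                + a ord0 i2 * (u ord0 - u i2) ^+ 2 + a i1 i2 * (u i1 - u i2) ^+ 2.
Proof.
move=> a_sym a_diag; rewrite /Dform !sum_ord3 !a_diag.
by rewrite (a_sym i1 ord0) (a_sym i2 ord0) (a_sym i2 i1); field.
Qed.

(* Irreducibility, applied to a singleton, makes every vertex conduct. *)
Lemma row_sum_gt0 {a : 'M[R]_3} (k : 'I_3) : inM R a -> 0 < \sum_j a k j.
Proof.
case=> _ _ a_ge0 irr.
have k_ne0 : [set k]%SET != finset.set0.
  by apply/set0Pn; exists k; rewrite finset.in_set1.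
have k_neT : [set k]%SET != [set: 'I_3]%SET.
  apply/eqP => kT; have := finset.cards1 k.
  by rewrite kT finset.cardsT card_ord.
have [i [j [/finset.set1P -> _ akj_gt0]]] := irr _ k_ne0 k_neT.
by rewrite (bigD1 j) //= ltr_wpDr // sumr_ge0.
Qed.

(* Sum-of-squares identity comparing a weighted triangle with the complete
   graph; it yields the constant (pq + ps + qs) / (2 (p + q + s)). *)
Lemma weighted_triangle_lower (p q s x y z : R) :
  (p * q + p * s + q * s) * ((x - y) ^+ 2 + (x - z) ^+ 2 + (y - z) ^+ 2)
  <= 2 * (p + q + s) * (p * (x - y) ^+ 2 + q * (x - z) ^+ 2 + s * (y - z) ^+ 2).
Proof.
rewrite -subr_ge0.
have -> : 2 * (p + q + s) * (p * (x - y) ^+ 2 + q * (x - z) ^+ 2 + s * (y - z) ^+ 2)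
  - (p * q + p * s + q * s) * ((x - y) ^+ 2 + (x - z) ^+ 2 + (y - z) ^+ 2)
  = (p * (x - y) + q * (x - z)) ^+ 2 + (p * (x - y) + s * (z - y)) ^+ 2
    + (q * (x - z) - s * (z - y)) ^+ 2 by ring.
by rewrite !addr_ge0 ?sqr_ge0.
Qed.

(* An irreducible form dominates a positive multiple of sqdiff: the three
   row sums p + q, p + s, q + s are positive, hence so is pq + ps + qs. *)
Lemma Dform_lower {a : 'M[R]_3} : inM R a ->
  exists2 m, 0 < m & forall u, m * sqdiff u <= Dform R a u u.
Proof.
move=> aM; have [a_sym a_diag a_ge0 _] := aM.
have row k := row_sum_gt0 k aM; move: (row ord0) (row i1) (row i2).
rewrite !sum_ord3 !a_diag !addr0 add0r (a_sym i1 ord0) (a_sym i2 ord0) (a_sym i2 i1).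
have := a_ge0 ord0 i1; have := a_ge0 ord0 i2; have := a_ge0 i1 i2.
set p := a ord0 i1; set q := a ord0 i2; set s := a i1 i2.
move=> s_ge0 q_ge0 p_ge0 r0 r1 r2.
have num_gt0 : 0 < p * q + p * s + q * s.
  have [p_gt0 | p_le0] := ltP 0 p.
    have pqs_gt0 : 0 < p * (q + s) by rewrite mulr_gt0 //; lra.
    have qs_ge0 : 0 <= q * s by rewrite mulr_ge0.
    by rewrite mulrDr in pqs_gt0; lra.
  have -> : p = 0 by lra.
  by rewrite !mul0r !add0r mulr_gt0 //; lra.
exists ((p * q + p * s + q * s) / (2 * (p + q + s))).
  by rewrite divr_gt0 // mulr_gt0 //; lra.
move=> u; rewrite Dform_edges // mulrAC ler_pdivrMr; last lra.
by rewrite [_ * (2 * _)]mulrC weighted_triangle_lower.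
Qed.

Lemma Dform_upper {a : 'M[R]_3} : inM R a ->
  exists2 M, 0 <= M & forall u, Dform R a u u <= M * sqdiff u.
Proof.
case=> a_sym a_diag a_ge0 _.
exists (a ord0 i1 + a ord0 i2 + a i1 i2); first by rewrite !addr_ge0.
move=> u; rewrite Dform_edges // /sqdiff.
have := a_ge0 ord0 i1; have := a_ge0 ord0 i2; have := a_ge0 i1 i2.
have := sqr_ge0 (u ord0 - u i1); have := sqr_ge0 (u ord0 - u i2).
have := sqr_ge0 (u i1 - u i2); nra.
Qed.

Lemma forms_comparable {a a' : 'M[R]_3} : inM R a -> inM R a' ->
  exists2 c, 0 < c & forall u, c * Dform R a' u u <= Dform R a u u.
Proof.
move=> aM a'M; have [m m_gt0 lower] := Dform_lower aM.
have [M M_ge0 upper] := Dform_upper a'M.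
have M1_gt0 : 0 < M + 1 by rewrite ltr_wpDl.
exists (m / (M + 1)); first by rewrite divr_gt0.
move=> u; apply: le_trans (lower u).
apply: le_trans (_ : m / (M + 1) * (M * sqdiff u) <= _).
  by rewrite ler_wpM2l ?upper // divr_ge0 // ltW.
rewrite mulrA ler_wpM2r ?sqdiff_ge0 // mulrAC ler_pdivrMr // ler_wpM2l ?ltW //.
lra.
Qed.

Lemma Dform_nonzero {a : 'M[R]_3} : inM R a -> exists u, 0 < Dform R a u u.
Proof.
move=> aM; have [a_sym a_diag _ _] := aM.
exists (fun i => (i == ord0)%:R); rewrite Dform_edges //=.
have := row_sum_gt0 ord0 aM; rewrite sum_ord3 a_diag.
by rewrite subr0 subrr expr1n expr0n /= !mulr1 mulr0 addr0 add0r.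
Qed.

End QuadraticForms.

Section Renormalization.
Context {R : realType} (W1 : set (seq 'I_3)) {r : R}.
Hypothesis r_gt0 : 0 < r.

Local Open Scope ereal_scope.

Lemma Psi_scale {c : R} {a a' : 'M[R]_3} (f : (R * R)%type -> R) :
  (0 < c)%R -> (forall i j, 0 <= a' i j)%R ->
  (forall g : 'I_3 -> R, c * Dform R a' g g <= Dform R a g g)%R ->
  c%:E * Psi R W1 r a' f <= Psi R W1 r a f.
Proof.
move=> c_gt0 a'_ge0 le_form; rewrite /Psi /esum -ereal_sup_pZl //.
apply: ge_ereal_sup => _ [_ [A A_fsets <-] <-].
have weight_ge0 w : (0 <= r ^- (size w).-1)%R by rewrite invr_ge0 exprn_ge0 // ltW.
rewrite ge0_mule_fsumr; last by move=> w; rewrite lee_fin mulr_ge0 ?Dform_ge0.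
apply: esum_ge; exists A => //; apply: lee_fsum => [|w _]; first by case: A_fsets.
by rewrite -EFinM lee_fin mulrCA ler_wpM2l.
Qed.

Lemma RR_scale {c : R} {a a' : 'M[R]_3} (u : 'I_3 -> R) :
  (0 < c)%R -> (forall i j, 0 <= a' i j)%R ->
  (forall g : 'I_3 -> R, c * Dform R a' g g <= Dform R a g g)%R ->
  c%:E * RR R W1 r a' u <= RR R W1 r a u.
Proof.
move=> c_gt0 a'_ge0 le_form; apply/ereal_infP => _ [f [Psi_fin f_bnd] <-].
have le_Psi := Psi_scale f c_gt0 a'_ge0 le_form.
have Psi'_fin : Psi R W1 r a' f < +oo.
  rewrite ltNge leye_eq; apply/negP => /eqP Psi'_oo.
  move: le_Psi; rewrite Psi'_oo muleC gt0_mulye ?lte_fin // leye_eq => /eqP Psi_oo.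
  by move: Psi_fin; rewrite Psi_oo ltxx.
apply: le_trans le_Psi; apply: lee_wpmul2l; first by rewrite lee_fin ltW.
by apply: ereal_inf_lbound; exists f.
Qed.

End Renormalization.

Section Eigenvalue.
Context {R : realType}.

Lemma bernoulli_ineq (k : R) (n : nat) : 1 <= k -> 1 + n%:R * (k - 1) <= k ^+ n.
Proof.
move=> k_ge1; elim: n => [|n IH]; first by rewrite mul0r addr0 expr0.
have kn_ge1 : 1 <= k ^+ n by rewrite exprn_ege1.
rewrite exprS -natr1; nra.
Qed.

Lemma bounded_geometric_ratio_le1 (c k B : R) :
  0 < c -> (forall n, c * k ^+ n <= B) -> k <= 1.
Proof.
move=> c_gt0 bounded; rewrite leNgt; apply/negP => k_gt1.
have ck_gt0 : 0 < c * (k - 1) by rewrite mulr_gt0 // subr_gt0.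
have B_ge0 : 0 <= B by apply: le_trans (bounded 0%N); rewrite expr0 mulr1 ltW.
have := archi_boundP (divr_ge0 B_ge0 (ltW ck_gt0)); rewrite ltr_pdivrMr //.
set N := Num.bound _ => lt_B.
have := ler_wpM2l (ltW c_gt0) (bernoulli_ineq k N (ltW k_gt1)).
have := bounded N; lra.
Qed.

Context {W1 : set (seq 'I_3)} {r : R} {a a' : 'M[R]_3} {lam lam' : R}.
Hypotheses (r_gt0 : 0 < r) (aM : inM R a) (a'M : inM R a').
Hypotheses (lam_gt0 : 0 < lam) (lam'_gt0 : 0 < lam').
Hypothesis eigen : forall u, RR R W1 r a u = (lam * Dform R a u u)%:E.
Hypothesis eigen' : forall u, RR R W1 r a' u = (lam' * Dform R a' u u)%:E.

Lemma comparison_step (c : R) : 0 < c ->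
  (forall u, c * Dform R a' u u <= Dform R a u u) ->
  forall u, c * (lam' / lam) * Dform R a' u u <= Dform R a u u.
Proof.
move=> c_gt0 le_form u.
have a'_ge0 : forall i j, 0 <= a' i j by case: a'M.
have := RR_scale W1 r_gt0 u c_gt0 a'_ge0 le_form.
rewrite eigen eigen' -EFinM lee_fin => le_eigen.
have -> : c * (lam' / lam) * Dform R a' u u = c * (lam' * Dform R a' u u) / lam.
  by field; rewrite lt0r_neq0.
by rewrite ler_pdivrMr // [_ * lam]mulrC.
Qed.

(* Starting from a comparison constant c, all c (lam'/lam)^n are admissible;
   evaluated at u0 with D'(u0) > 0 they stay below D(u0) / D'(u0). *)
Lemma eigenvalue_le : lam' <= lam.
Proof.
have [c c_gt0 le_form] := forms_comparable aM a'M.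
have [u0 Du0_gt0] := Dform_nonzero a'M.
have iterate n : forall u,
    c * (lam' / lam) ^+ n * Dform R a' u u <= Dform R a u u.
  elim: n => [|n IH]; first by move=> u; rewrite expr0 mulr1.
  rewrite exprSr [c * _]mulrA; apply: comparison_step => //.
  by rewrite mulr_gt0 // exprn_gt0 // divr_gt0.
have : lam' / lam <= 1.
  apply: (bounded_geometric_ratio_le1 _ _ (Dform R a u0 u0 / Dform R a' u0 u0) c_gt0).
  by move=> n; rewrite ler_pdivlMr.
by rewrite ler_pdivrMr // mul1r.
Qed.

End Eigenvalue.

Lemma rho_ge0 (R : realType) : 0 <= rho R.
Proof. by rewrite /rho divr_ge0 // subr_ge0 -[leLHS]sqrtr1 ler_sqrt // ler1n. Qed.

Theorem lemma5p2 (R : realType) (r : R) (W1 : set (seq 'I_3))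
  (a a' : 'M[R]_3) (lam lam' : R) :
  rho R < r -> r < 1 -> W1_spec R W1 ->
  inM R a -> inM R a' -> 0 < lam -> 0 < lam' ->
  (forall u : 'I_3 -> R, RR R W1 r a u = (lam * Dform R a u u)%:E) ->
  (forall u : 'I_3 -> R, RR R W1 r a' u = (lam' * Dform R a' u u)%:E) ->
  lam = lam'.
Proof.
move=> rho_lt_r _ _ aM a'M lam_gt0 lam'_gt0 eigen eigen'.
have r_gt0 : 0 < r := le_lt_trans (rho_ge0 R) rho_lt_r.
apply/eqP; rewrite eq_le.
by rewrite (eigenvalue_le r_gt0 a'M aM lam'_gt0 lam_gt0 eigen' eigen)
           (eigenvalue_le r_gt0 aM a'M lam_gt0 lam'_gt0 eigen eigen').
Qed.
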